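(* In the setting described in the context, let $\sigma_w,\sigma_v$ be real scalars, suppose $W=\rho I$ for some $\rho>0$, and consider $$\tilde\Sigma_\tau(s)=R^T\big(sI+L_{e,s}^\tau RWR^T\big)^{-1}\begin{bmatrix}\sigma_wD_\tau^TE^{-1/2} & -\sigma_vL_{e,s}^\tau RW^{1/2}\end{bmatrix}.$$ Then $$\|\tilde\Sigma_\tau\|_\infty^2=\frac{1}{\rho^2}\sigma_w^2\,\bar\sigma\big(R^T(RR^TL_{e,s}^\tau RR^T)^{-1}R\big)+\frac{1}{\rho}\sigma_v^2.$$
   Context: Let $\mathcal G$ be an undirected, connected graph without self-loops, with node set $\{1,\dots,n\}$ ($n\ge2$) and edge set $\mathcal E$, $m=|\mathcal E|$. Give each edge an arbitrary orientation; the incidence matrix $D\in\mathbb R^{n\times m}$ has $D_{il}=1$ if node $i$ is the initial node of edge $l$, $-1$ if it is the terminal node, and $0$ otherwise. Fix a spanning tree $\mathcal G_\tau$ and order the edges so the first $n-1$ are tree edges; write $D=[D_\tau\ D_c]$ with $D_\tau\in\mathbb R^{n\times(n-1)}$. Set $T_\tau^c=(D_\tau^TD_\tau)^{-1}D_\tau^TD_c$ and $R=[I_{n-1}\ T_\tau^c]\in\mathbb R^{(n-1)\times m}$. $W\in\mathbb R^{m\times m}$ is the (diagonal, positive) edge-weight matrix and $E=\mathrm{diag}(\epsilon_1,\dots,\epsilon_n)$, $\epsilon_i>0$, is the time-scale matrix; powers of diagonal matrices are taken entrywise. Define $L_{e,s}^\tau=D_\tau^TE^{-1}D_\tau$. For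 a stable transfer matrix $\Phi(s)$, $\|\Phi\|_\infty=\sup_{\omega\in\mathbb R}\bar\sigma(\Phi(j\omega))$ where $\bar\sigma$ is the largest singular value. *)

From HB Require Import structures.
From mathcomp Require Import all_boot all_order all_algebra.
From mathcomp Require Import complex.
From mathcomp Require Import classical_sets reals.
Set Implicit Arguments. Unset Strict Implicit. Unset Printing Implicit Defensive.
Import Order.TTheory GRing.Theory Num.Theory.
Local Open Scope ring_scope.
Local Open Scope classical_set_scope.

Section Defs.
Variable R : realType.

Definition cmx (p q : nat) (A : 'M[R]_(p, q)) : 'M[R[i]]_(p, q) :=
  map_mx (fun x => (x%:C)%C) A.

Definition adjmx (p q : nat) (A : 'M[R[i]]_(p, q)) : 'M[R[i]]_(q, p) :=
  map_mx (@conjc R) A^T.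

(* largest singular value: square root of the largest eigenvalue of A^H A
   (whose eigenvalues are real and nonnegative) *)
Definition sigma_max (p q : nat) (A : 'M[R[i]]_(p, q)) : R :=
  Num.sqrt (sup [set x : R | eigenvalue (adjmx A *m A) (x%:C)%C]).

Definition hinf_set (p q : nat) (Phi : R[i] -> 'M[R[i]]_(p, q)) : set R :=
  [set sigma_max (Phi ((0 +i* w)%C)) | w in [set: R]].

Definition hinf_norm (p q : nat) (Phi : R[i] -> 'M[R[i]]_(p, q)) : R :=
  sup (hinf_set Phi).

Definition incidence (n m : nat) (src tgt : 'I_m -> 'I_n) : 'M[R]_(n, m) :=
  \matrix_(i, l) ((i == src l)%:R - (i == tgt l)%:R).

Definition diagv (k : nat) (d : 'I_k -> R) : 'M[R]_k := diag_mx (\row_i d i).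

End Defs.

(* undirected adjacency relation induced by the first nt edges
   (the tree edges) *)
Definition tree_rel (n nt c : nat) (src tgt : 'I_(nt + c) -> 'I_n) : rel 'I_n :=
  fun i j => [exists l : 'I_nt,
    ((src (lshift c l) == i) && (tgt (lshift c l) == j)) ||
    ((src (lshift c l) == j) && (tgt (lshift c l) == i))].

(* the first nt edges form a spanning tree: they connect all nodes
   (with nt = n - 1 edges on n nodes this is equivalent to being a tree) *)
Definition spanning_tree (n nt c : nat) (src tgt : 'I_(nt + c) -> 'I_n) : Prop :=
  forall i j : 'I_n, connect (tree_rel src tgt) i j.

From HB Require Import structures.
From mathcomp Require Import all_boot all_order all_algebra.
From mathcomp Require Import complex.
From mathcomp Require Import classical_sets reals.
From mathcomp Require Import boolp zify ring.
Import Order.TTheory GRing.Theory Num.Theory.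
Local Open Scope ring_scope.
Local Open Scope complex_scope.
Set Implicit Arguments. Unset Strict Implicit.

(* Write L = A A^T with A = D_tau^T E^-1/2 and P = R R^T; both are positive definite,
   D_tau having full column rank because the tree spans the graph.  With
   K(s) = s I + rho L P, two congruence identities hold for purely imaginary s:
     K Q K^H = |s|^2 Q + rho^2 L            where Q = P^-1 L^-1 P^-1,
     K P^-1 K^H = |s|^2 P^-1 + rho^2 L P L,
   so K^-1 L K^-H <= Q / rho^2 and K^-1 L P L K^-H <= P^-1 / rho^2 in the Loewner
   order, with equality at s = 0.  As B B^T = sw^2 L + rho sv^2 L P L, this bounds
   Sigma(s) Sigma(s)^H by (sw^2 N + rho sv^2 Pm) / rho^2, where N = R^T Q R and
   Pm = R^T P^-1 R, and the bound is attained at s = 0.  Finally Pm is the orthogonal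
   projection onto the row space of R, which contains the range of N, so a top
   eigenvector of N is an eigenvector of the bound for sw^2 sigma_max(N) + rho sv^2. *)

Lemma ker0_row_free (F : fieldType) p q (X : 'M[F]_(p, q)) :
  (forall v : 'rV_p, v *m X = 0 -> v = 0) -> row_free X.
Proof.
move=> kerX; rewrite -kermx_eq0; apply/eqP/row_matrixP => i.
by rewrite row0; apply: kerX; rewrite -row_mul mulmx_ker row0.
Qed.

Lemma invmxM (K : comUnitRingType) p (X Y : 'M[K]_p) : X \in unitmx -> Y \in unitmx ->
  invmx (X *m Y) = invmx Y *m invmx X.
Proof.
move=> uX uY; have uXY : X *m Y \in unitmx by rewrite unitmx_mul uX.
have XYV : X *m Y *m (invmx Y *m invmx X) = 1%:M.
  by rewrite mulmxA mulmxK // mulmxV.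
by rewrite -[LHS]mulmx1 -XYV mulmxA mulVmx ?mul1mx.
Qed.

Lemma row_free_row_mx1 (F : fieldType) k m (T : 'M[F]_(k, m)) : row_free (row_mx 1%:M T).
Proof. by apply: ker0_row_free => v; rewrite mul_mx_row mulmx1 -row_mx0 => /eq_row_mx[]. Qed.

Lemma diag_mxM (K : pzRingType) k (a b : 'rV[K]_k) :
  diag_mx a *m diag_mx b = diag_mx (\row_j (a 0 j * b 0 j)).
Proof.
apply/matrixP => i j; rewrite mul_diag_mx !mxE.
by case: eqP => [->|_]; rewrite ?mulr1n ?mulr0n ?mulr0.
Qed.

Section ConjugateTranspose.
Variable R : realType.
Local Notation C := R[i].

Lemma adjmxM p q r (A : 'M[C]_(p, q)) (B : 'M_(q, r)) :
  adjmx (A *m B) = adjmx B *m adjmx A.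
Proof. by rewrite /adjmx trmx_mul map_mxM. Qed.

Lemma adjmxK p q (A : 'M[C]_(p, q)) : adjmx (adjmx A) = A.
Proof. by apply/matrixP => i j; rewrite !mxE conjcK. Qed.

Lemma adjmxD p q (A B : 'M[C]_(p, q)) : adjmx (A + B) = adjmx A + adjmx B.
Proof. by apply/matrixP => i j; rewrite !mxE rmorphD. Qed.

Lemma adjmxN p q (A : 'M[C]_(p, q)) : adjmx (- A) = - adjmx A.
Proof. by apply/matrixP => i j; rewrite !mxE rmorphN. Qed.

Lemma adjmxZ p q (a : C) (A : 'M[C]_(p, q)) : adjmx (a *: A) = (a^*)%C *: adjmx A.
Proof. by apply/matrixP => i j; rewrite !mxE rmorphM. Qed.

Lemma adjmx1 p : adjmx (1%:M : 'M[C]_p) = 1%:M.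
Proof. by apply/matrixP => i j; rewrite !mxE rmorphMn rmorph1 eq_sym. Qed.

Lemma adjmxV p (A : 'M[C]_p) : adjmx (invmx A) = invmx (adjmx A).
Proof. by rewrite /adjmx trmx_inv map_invmx. Qed.

Lemma adjmx_cmx p q (A : 'M[R]_(p, q)) : adjmx (cmx A) = cmx A^T.
Proof. by apply/matrixP => i j; rewrite !mxE conjc_real. Qed.

Definition normsq k (u : 'rV[C]_k) : C := (u *m adjmx u) 0 0.

Definition qform k (u : 'rV[C]_k) (H : 'M[C]_k) : C := (u *m H *m adjmx u) 0 0.

Lemma normsq_sum k (u : 'rV[C]_k) : normsq u = \sum_j u 0 j * (u 0 j)^*.
Proof. by rewrite /normsq mxE; apply: eq_bigr => j _; rewrite !mxE. Qed.

Lemma normsq_ge0 k (u : 'rV[C]_k) : 0 <= normsq u.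
Proof. by rewrite normsq_sum sumr_ge0 // => j _; exact: mul_conjC_ge0. Qed.

Lemma normsq_eq0 k (u : 'rV[C]_k) : normsq u = 0 -> u = 0.
Proof.
rewrite normsq_sum => u0; apply/rowP => j; rewrite mxE.
have := @psumr_eq0P _ _ predT _ (fun j _ => mul_conjC_ge0 (u 0 j)) u0 j isT.
by move/eqP; rewrite mulf_eq0 conjc_eq0 orbb => /eqP.
Qed.

Lemma normsq_gt0 k (u : 'rV[C]_k) : u != 0 -> 0 < normsq u.
Proof.
move=> u_neq0; rewrite lt_def normsq_ge0 andbT.
by apply: contra u_neq0 => /eqP/normsq_eq0 ->.
Qed.

Lemma qformD k (u : 'rV[C]_k) H1 H2 : qform u (H1 + H2) = qform u H1 + qform u H2.
Proof. by rewrite /qform mulmxDr mulmxDl mxE. Qed.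

Lemma qformN k (u : 'rV[C]_k) H : qform u (- H) = - qform u H.
Proof. by rewrite /qform mulmxN mulNmx mxE. Qed.

Lemma qformZ k (u : 'rV[C]_k) a H : qform u (a *: H) = a * qform u H.
Proof. by rewrite /qform -scalemxAr -scalemxAl mxE. Qed.

Lemma qform1 k (u : 'rV[C]_k) : qform u 1%:M = normsq u.
Proof. by rewrite /qform mulmx1. Qed.

Lemma qformM k p (u : 'rV[C]_k) (X : 'M[C]_(k, p)) H :
  qform (u *m X) H = qform u (X *m H *m adjmx X).
Proof. by rewrite /qform adjmxM !mulmxA. Qed.

Lemma qform_gram k p (u : 'rV[C]_k) (X : 'M[C]_(k, p)) :
  qform u (X *m adjmx X) = normsq (u *m X).
Proof. by rewrite /normsq /qform adjmxM !mulmxA. Qed.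

Lemma qform_gram_ge0 k p (u : 'rV[C]_k) (X : 'M[C]_(k, p)) :
  0 <= qform u (X *m adjmx X).
Proof. by rewrite qform_gram normsq_ge0. Qed.

Lemma qform_gram_eq0 k p (u : 'rV[C]_k) (X : 'M[C]_(k, p)) :
  qform u (X *m adjmx X) = 0 -> u *m (X *m adjmx X) = 0.
Proof. by rewrite qform_gram => /normsq_eq0 uX0; rewrite mulmxA uX0 mul0mx. Qed.

Lemma qform_eigen k (H : 'M[C]_k) v a : v *m H = a *: v -> qform v H = a * normsq v.
Proof. by move=> vH; rewrite /qform vH -scalemxAl mxE. Qed.

Lemma gram_unitmx p q (X : 'M[C]_(p, q)) : row_free X -> X *m adjmx X \in unitmx.
Proof.
move=> freeX; rewrite -row_free_unit; apply: ker0_row_free => v vXX.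
have /normsq_eq0/eqP : normsq (v *m X) = 0.
  by rewrite -qform_gram /qform vXX mul0mx mxE.
by rewrite mulmx_free_eq0 // => /eqP.
Qed.

End ConjugateTranspose.


Lemma sup_le_nonneg (R : realType) (S : set R) V :
  0 <= V -> (forall x, S x -> x <= V) -> sup S <= V.
Proof.
move=> V_ge0 S_le; have [[x Sx]|S0] := pselect (exists x, S x).
  by apply: ge_sup; [exists x | apply/ubP].
rewrite (_ : S = set0) ?sup0 //; apply/seteqP; split => y // Sy.
by case: S0; exists y.
Qed.

Lemma has_sup_max (R : realType) (S : set R) x : S x -> (forall y, S y -> y <= x) -> has_sup S.
Proof. by move=> Sx S_le; split; [exists x | exists x; apply/ubP]. Qed.

Lemma sup_max (R : realType) (S : set R) x : S x -> (forall y, S y -> y <= x) -> sup S = x.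
Proof.
move=> Sx S_le; apply/le_anti; rewrite ge_sup /=; [|by exists x|by apply/ubP].
exact: sup_upper_bound (has_sup_max Sx S_le) _ Sx.
Qed.

Section Spectral.
Variable R : realType.
Local Notation C := R[i].

Lemma hermitian_diagonalization k (G : 'M[C]_k) : adjmx G = G ->
  exists (P : 'M[C]_k) (d : 'rV[R]_k),
  [/\ P *m adjmx P = 1%:M, adjmx P *m P = 1%:M &
      G = adjmx P *m diag_mx (cmx d) *m P].
Proof.
move=> GH.
have G_herm : G \is hermsymmx.
  by apply/is_hermitianmxP; rewrite expr0 scale1r -[X in _ = X]/(adjmx G) GH.
have /hermitian_normalmx/orthomx_spectralP GE := G_herm.
have P_unitary := spectral_unitarymx G.
have d_real := hermitian_spectral_diag_real G_herm.
move: GE P_unitary d_real; set P := spectralmx G; set d := spectral_diag G.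
move=> GE P_unitary d_real; exists P, (\row_j complex.Re (d 0 j)).
have PPH : P *m adjmx P = 1%:M by apply/eqP; exact: P_unitary.
have PHP : adjmx P *m P = 1%:M.
  by rewrite -[adjmx P]/(map_mx Num.conj P^T) -invmx_unitary // mulVmx // unitarymx_unit.
split => //; have -> : cmx (\row_j complex.Re (d 0 j)) = d.
  by apply/rowP => j; rewrite !mxE RRe_real //; move/mxOverP: d_real; apply.
by rewrite {1}GE invmx_unitary.
Qed.

Section UnitaryDiagonal.
Variables (k : nat) (P : 'M[C]_k) (d : 'rV[R]_k).
Hypotheses (PPH : P *m adjmx P = 1%:M) (PHP : adjmx P *m P = 1%:M).
Let G := adjmx P *m diag_mx (cmx d) *m P.

Lemma diag_qform_le u x : (forall i, d 0 i <= x) -> qform u G <= x%:C * normsq u.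
Proof.
move=> d_le; set y := u *m adjmx P.
have -> : qform u G = qform y (diag_mx (cmx d)) by rewrite qformM adjmxK.
have -> : normsq u = normsq y.
  by rewrite -!qform1 qformM adjmxK mulmx1 PHP.
clearbody y; rewrite /qform mxE normsq_sum mulr_sumr; apply: ler_sum => j _.
rewrite mul_mx_diag !mxE mulrAC mulrC ler_wpM2r ?mul_conjC_ge0 ?lecR //.
Qed.

Lemma row_diag_eigen i : row i P *m G = (d 0 i)%:C *: row i P /\ row i P != 0.
Proof.
have PiPH : row i P *m adjmx P = delta_mx 0 i by rewrite rowE -mulmxA PPH mulmx1.
split.
  rewrite /G !mulmxA PiPH rowE scalemxAl; congr (_ *m _).
  apply/matrixP => a b; rewrite mul_mx_diag !mxE (ord1 a) eqxx /=.
  by case: eqP => [->|_]; rewrite ?mulr1 ?mul1r ?mulr0 ?mul0r.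
apply/eqP => Pi0; move: PiPH; rewrite Pi0 mul0mx => /matrixP/(_ 0 i).
by rewrite !mxE !eqxx => /eqP; rewrite eq_sym oner_eq0.
Qed.

End UnitaryDiagonal.

Lemma gram_eigen_le p q (X : 'M[C]_(p, q)) V x : 0 <= V ->
  (forall u, qform u (X *m adjmx X) <= V%:C * normsq u) ->
  eigenvalue (adjmx X *m X) x%:C -> x <= V.
Proof.
move=> V_ge0 XV /eigenvalueP [v vX v_neq0].
have [->//|x_neq0] := eqVneq x 0.
set w := v *m adjmx X.
have wX : w *m (X *m adjmx X) = x%:C *: w.
  by rewrite /w mulmxA -(mulmxA v) vX -scalemxAl.
have w_neq0 : w != 0.
  apply/eqP => w0; move: vX; rewrite mulmxA -/w w0 mul0mx => /esym/eqP.
  rewrite scalemx_eq0 (negbTE v_neq0) orbF => /eqP/complexI/eqP.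
  by rewrite (negbTE x_neq0).
by have := XV w; rewrite (qform_eigen wX) ler_pM2r ?normsq_gt0 // lecR.
Qed.

Lemma sigma_max_ge0 p q (X : 'M[C]_(p, q)) : 0 <= sigma_max X.
Proof. exact: sqrtr_ge0. Qed.

Lemma sigma_max_le p q (X : 'M[C]_(p, q)) V : 0 <= V ->
  (forall u, qform u (X *m adjmx X) <= V%:C * normsq u) ->
  sigma_max X <= Num.sqrt V.
Proof.
by move=> V_ge0 XV; rewrite ler_wsqrtr // sup_le_nonneg // => x; apply: gram_eigen_le.
Qed.

Lemma sigma_max_eq p q (X : 'M[C]_(p, q)) V (w : 'rV_p) : 0 <= V ->
  (forall u, qform u (X *m adjmx X) <= V%:C * normsq u) ->
  w != 0 -> w *m (X *m adjmx X) = V%:C *: w -> sigma_max X = Num.sqrt V.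
Proof.
move=> V_ge0 XV w_neq0 wX; apply/le_anti; rewrite sigma_max_le //=.
have [->|V_neq0] := eqVneq V 0; first by rewrite sqrtr0 sqrtr_ge0.
have XHX_V : eigenvalue (adjmx X *m X) V%:C.
  apply/eigenvalueP; exists (w *m X); first by rewrite mulmxA -(mulmxA w) wX -scalemxAl.
  apply/eqP => wX0; move: wX; rewrite mulmxA wX0 mul0mx => /esym/eqP.
  rewrite scalemx_eq0 (negbTE w_neq0) orbF => /eqP/complexI/eqP.
  by rewrite (negbTE V_neq0).
rewrite ler_wsqrtr // sup_upper_bound //.
by apply: has_sup_max XHX_V _ => x; apply: gram_eigen_le.
Qed.

Lemma sigma_max_gram k p (X : 'M[C]_(k, p)) : (0 < k)%N ->
  (forall u, qform u (X *m adjmx X) <= (sigma_max (X *m adjmx X))%:C * normsq u) /\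
  exists2 v : 'rV_k, v != 0 &
    v *m (X *m adjmx X) = (sigma_max (X *m adjmx X))%:C *: v.
Proof.
move=> k_gt0; set N := X *m adjmx X.
have NH : adjmx N = N by rewrite /N adjmxM adjmxK.
have [P [d [PPH PHP NE]]] := hermitian_diagonalization NH.
have d_ge0 i : 0 <= d 0 i.
  have [Pi_eigen Pi_neq0] := row_diag_eigen d PPH i; rewrite -NE in Pi_eigen.
  have := qform_gram_ge0 (row i P) X; rewrite -/N (qform_eigen Pi_eigen).
  by rewrite pmulr_lge0 ?normsq_gt0 // ler0c.
have [i0 _ d_max] := @arg_maxP _ _ _ (Ordinal k_gt0) predT (fun i => d 0 i) isT.
have [Pi0_eigen Pi0_neq0] := row_diag_eigen d PPH i0; rewrite -NE in Pi0_eigen.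
suff -> : sigma_max N = d 0 i0.
  split; last by exists (row i0 P).
  by move=> u; rewrite NE diag_qform_le // => i; apply: d_max.
pose d2 := \row_j d 0 j ^+ 2.
have NNH : N *m adjmx N = adjmx P *m diag_mx (cmx d2) *m P.
  rewrite NH {1}NE {1}NE !mulmxA -(mulmxA _ P) PPH mulmx1 -(mulmxA (adjmx P)) diag_mxM.
  by congr (_ *m diag_mx _ *m _); apply/rowP => j; rewrite !mxE rmorphXn expr2.
have [Pi0_eigen2 _] := row_diag_eigen d2 PPH i0; rewrite -NNH mxE in Pi0_eigen2.
rewrite (sigma_max_eq _ _ Pi0_neq0 Pi0_eigen2) ?sqrtr_sqr ?ger0_norm ?sqr_ge0 //.
move=> u; rewrite NNH diag_qform_le // => j.
by rewrite mxE lerXn2r ?nnegrE ?d_ge0 //; apply: d_max.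
Qed.

End Spectral.


Section TransferFunction.
Variable R : realType.
Local Notation C := R[i].

Lemma imaginary_shift_congruence k (s c : C) (T Y Z S : 'M[C]_k) :
  s + (s^*)%C = 0 -> (c^*)%C = c ->
  T *m Y = Z -> Y *m adjmx T = Z -> T *m Y *m adjmx T = S ->
  (s *: 1%:M + c *: T) *m Y *m adjmx (s *: 1%:M + c *: T) =
    (s * (s^*)%C) *: Y + (c * c) *: S.
Proof.
move=> s_imag c_real TY YT TYT.
rewrite adjmxD !adjmxZ adjmx1 c_real mulmxDl !mulmxDr -!scalemxAl !mul1mx.
rewrite -!scalemxAr !mulmx1 mulmxDl -!scalemxAl TYT TY YT !scalerDr !scalerA.
have -> : (c * s) *: Z = - (((s^*)%C * c) *: Z).
  have sN : - (s^*)%C = s by apply/eqP; rewrite eq_sym -subr_eq0 opprK s_imag.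
  by rewrite -{1}sN mulrN scaleNr mulrC.
by rewrite addrA addrK mulrC.
Qed.

Variables (k p m q : nat) (A : 'M[C]_(k, p)) (Rc : 'M[C]_(k, m)) (B : 'M[C]_(k, q)).
Variables (r a b : R).
Hypotheses (k_gt0 : (0 < k)%N) (A_free : row_free A) (Rc_free : row_free Rc).
Hypotheses (r_gt0 : 0 < r) (a_ge0 : 0 <= a) (b_ge0 : 0 <= b).

Let L := A *m adjmx A.
Let P := Rc *m adjmx Rc.
Hypothesis BBH : B *m adjmx B = a%:C *: L + b%:C *: (L *m P *m L).

Let Li := invmx L.
Let Pi := invmx P.
Let Q := Pi *m Li *m Pi.
Let N := adjmx Rc *m Q *m Rc.
Let Pm := adjmx Rc *m Pi *m Rc.
Let K s := s *: 1%:M + r%:C *: (L *m P).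
Let Sigma s := adjmx Rc *m invmx (K s) *m B.

Let L_unit : L \in unitmx. Proof. exact: gram_unitmx. Qed.
Let P_unit : P \in unitmx. Proof. exact: gram_unitmx. Qed.
Let LH : adjmx L = L. Proof. by rewrite adjmxM adjmxK. Qed.
Let PH : adjmx P = P. Proof. by rewrite adjmxM adjmxK. Qed.
Let LiH : adjmx Li = Li. Proof. by rewrite adjmxV LH. Qed.
Let PiH : adjmx Pi = Pi. Proof. by rewrite adjmxV PH. Qed.
Let LLi : L *m Li = 1%:M. Proof. exact: mulmxV. Qed.
Let PiP : Pi *m P = 1%:M. Proof. exact: mulVmx. Qed.
Let rC : (r%:C)^* = r%:C. Proof. exact: conjc_real. Qed.
Let rC_gt0 : 0 < r%:C * r%:C :> C. Proof. by rewrite mulr_gt0 ?ltcR. Qed.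

Let Pi_gram : Pi = (Pi *m Rc) *m adjmx (Pi *m Rc).
Proof. by rewrite adjmxM PiH mulmxA -(mulmxA Pi Rc) PiP mul1mx. Qed.

Let Q_gram : Q = (Pi *m Li *m A) *m adjmx (Pi *m Li *m A).
Proof. by rewrite !adjmxM LiH PiH !mulmxA -(mulmxA _ A) -(mulmxA _ L) LLi mulmx1. Qed.

Let LPL_gram : L *m P *m L = (L *m Rc) *m adjmx (L *m Rc).
Proof. by rewrite adjmxM LH !mulmxA. Qed.

Let N_gram : N = (adjmx Rc *m (Pi *m Li *m A)) *m adjmx (adjmx Rc *m (Pi *m Li *m A)).
Proof. by rewrite [in RHS]adjmxM adjmxK {1}/N Q_gram !mulmxA. Qed.

Let KPiK s : s + (s^*)%C = 0 ->
  K s *m Pi *m adjmx (K s) = (s * (s^*)%C) *: Pi + (r%:C * r%:C) *: (L *m P *m L).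
Proof.
have LPPi : L *m P *m Pi = L by rewrite mulmxK.
move=> s_imag; apply: (imaginary_shift_congruence (Z := L)) => //.
- by rewrite adjmxM LH PH mulmxA mulVmx ?mul1mx.
- by rewrite LPPi adjmxM LH PH mulmxA.
Qed.

Let KQK s : s + (s^*)%C = 0 ->
  K s *m Q *m adjmx (K s) = (s * (s^*)%C) *: Q + (r%:C * r%:C) *: L.
Proof.
have LPQ : L *m P *m Q = Pi.
  by rewrite /Q (mulmxA _ (Pi *m Li)) (mulmxA _ Pi) mulmxK // mulmxV ?mul1mx.
move=> s_imag; apply: (imaginary_shift_congruence (Z := Pi)) => //.
- by rewrite /Q adjmxM LH PH mulmxA !mulmxKV.
- by rewrite LPQ adjmxM LH PH mulmxA mulVmx ?mul1mx.
Qed.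

Let K_unit s : s + (s^*)%C = 0 -> K s \in unitmx.
Proof.
move=> s_imag; rewrite -row_free_unit; apply: ker0_row_free => v vK.
have : qform v (K s *m Pi *m adjmx (K s)) = 0 by rewrite /qform !mulmxA vK !mul0mx mxE.
have Pi_ge0 : 0 <= s * (s^*)%C * qform v Pi.
  by rewrite mulr_ge0 ?mul_conjC_ge0 // Pi_gram qform_gram_ge0.
have LPL_ge0 : 0 <= r%:C * r%:C * qform v (L *m P *m L).
  by rewrite mulr_ge0 ?(ltW rC_gt0) // LPL_gram qform_gram_ge0.
rewrite KPiK // qformD !qformZ => /eqP; rewrite paddr_eq0 // => /andP[_].
rewrite mulf_eq0 (gt_eqF rC_gt0) /= LPL_gram qform_gram => /eqP/normsq_eq0/eqP.
rewrite mulmxA mulmx_free_eq0 // => /eqP vL0.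
by rewrite -[v](mulmxK L_unit) vL0 mul0mx.
Qed.

Let Sigma_qform_le s w : s + (s^*)%C = 0 ->
  qform w (Sigma s *m adjmx (Sigma s)) <=
    a%:C / (r%:C * r%:C) * qform w N + b%:C / (r%:C * r%:C) * qform w Pm.
Proof.
move=> s_imag; have K_unit_s := K_unit s_imag.
have scale_le (x e t : C) : 0 <= x -> 0 <= e ->
    x * t <= x / (r%:C * r%:C) * (e + r%:C * r%:C * t).
  move=> x_ge0 e_ge0; rewrite mulrDr (mulrA _ (_ * _)) divfK ?gt_eqF // lerDr.
  by rewrite mulr_ge0 // divr_ge0 // ltW.
have -> : Sigma s *m adjmx (Sigma s) =
    (adjmx Rc *m invmx (K s)) *m (B *m adjmx B) *m adjmx (adjmx Rc *m invmx (K s)).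
  by rewrite /Sigma adjmxM !mulmxA.
rewrite -qformM BBH qformD !qformZ mulmxA.
set y := w *m adjmx Rc *m invmx (K s).
have yK : y *m K s = w *m adjmx Rc by rewrite mulmxKV.
have -> : qform w N = qform (w *m adjmx Rc) Q by rewrite qformM adjmxK.
have -> : qform w Pm = qform (w *m adjmx Rc) Pi by rewrite qformM adjmxK.
clearbody y; rewrite -yK !qformM KQK // KPiK // !qformD !qformZ.
apply: lerD; apply: scale_le; rewrite ?ler0c // mulr_ge0 ?mul_conjC_ge0 //.
  by rewrite Q_gram qform_gram_ge0.
by rewrite Pi_gram qform_gram_ge0.
Qed.

Let Sigma0_gram :
  Sigma 0 *m adjmx (Sigma 0) = (a%:C / (r%:C * r%:C)) *: N + (b%:C / (r%:C * r%:C)) *: Pm.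
Proof.
have Sigma0 : Sigma 0 = (r%:C)^-1 *: (adjmx Rc *m Pi *m Li *m B).
  have LP_unit : L *m P \in unitmx by rewrite unitmx_mul L_unit.
  rewrite /Sigma /K scale0r add0r invmxZ ?unitmxZ ?unitfE ?gt_eqF ?ltcR //.
  by rewrite invmxM // -scalemxAr -scalemxAl !mulmxA.
rewrite Sigma0 adjmxZ conjc_inv rC -scalemxAl -scalemxAr scalerA.
set G := adjmx Rc *m Pi *m Li.
have GH : adjmx G = Li *m (Pi *m Rc) by rewrite !adjmxM adjmxK LiH PiH.
have GLG : G *m L *m adjmx G = N by rewrite mulmxKV // GH /N /Q !mulmxA.
have GLPLG : G *m (L *m P *m L) *m adjmx G = Pm.
  rewrite (mulmxA G (L *m P)) (mulmxA G L) !mulmxKV // GH.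
  by rewrite (mulmxA (adjmx Rc *m L)) mulmxK // mulmxA.
rewrite adjmxM mulmxA -(mulmxA G) BBH mulmxDr mulmxDl -!scalemxAr -!scalemxAl.
by rewrite GLG GLPLG scalerDr !scalerA invfM !(mulrC _ (_ / _)).
Qed.

Let Pm_qform_le w : qform w Pm <= normsq w.
Proof.
have PmH : adjmx Pm = Pm by rewrite !adjmxM adjmxK PiH mulmxA.
have PmPm : Pm *m Pm = Pm by rewrite /Pm !mulmxA -(mulmxA _ Rc (adjmx Rc)) mulmxKV.
have PmC : 1%:M - Pm = (1%:M - Pm) *m adjmx (1%:M - Pm).
  by rewrite adjmxD adjmxN adjmx1 PmH mulmxBl !mul1mx mulmxBr mulmx1 PmPm subrr subr0.
by have := qform_gram_ge0 w (1%:M - Pm); rewrite -PmC qformD qformN qform1 subr_ge0.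
Qed.

Let NPm : N *m Pm = N.
Proof. by rewrite /N /Pm /Q !mulmxA -(mulmxA _ Rc (adjmx Rc)) mulmxKV. Qed.

Let m_gt0 : (0 < m)%N.
Proof. by move: Rc_free (rank_leq_col Rc); rewrite /row_free => /eqP ->; apply: leq_trans. Qed.

Let N_qform_le u : qform u N <= (sigma_max N)%:C * normsq u.
Proof. by rewrite N_gram; have [] := sigma_max_gram (adjmx Rc *m (Pi *m Li *m A)) m_gt0. Qed.

Let N_top_eigen :
  exists2 w : 'rV[C]_m, w != 0 & w *m N = (sigma_max N)%:C *: w /\ w *m Pm = w.
Proof.
have [sigma0|sigma_neq0] := eqVneq (sigma_max N) 0.
  (* Then N = 0, and any nonzero vector of the row space of Rc will do. *)
  pose w : 'rV_m := delta_mx 0 (Ordinal k_gt0) *m Rc.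
  have w_neq0 : w != 0.
    rewrite mulmx_free_eq0 //; apply/eqP => /matrixP/(_ 0 (Ordinal k_gt0)).
    by rewrite !mxE !eqxx => /eqP; rewrite oner_eq0.
  exists w => //; split; last by rewrite /w /Pm !mulmxA -(mulmxA _ Rc (adjmx Rc)) mulmxK.
  have wN0 : qform w N = 0.
    apply/eqP; rewrite eq_le N_gram qform_gram_ge0 andbT -N_gram.
    by have := N_qform_le w; rewrite sigma0 mul0r.
  by move: wN0; rewrite sigma0 scale0r N_gram => /qform_gram_eq0.
have [_ [v v_neq0 vN]] := sigma_max_gram (adjmx Rc *m (Pi *m Li *m A)) m_gt0.
rewrite -N_gram in vN; exists v => //; split => //.
have -> : v = (sigma_max N)%:C^-1 *: (v *m N).
  by rewrite vN scalerA mulVf ?scale1r // fmorph_eq0.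
by rewrite -scalemxAl -mulmxA NPm.
Qed.

Theorem hinf_norm_transfer :
  (forall om : R, K (0 +i* om) \in unitmx) /\
  has_sup (hinf_set Sigma) /\
  hinf_norm Sigma ^+ 2 = a / r ^+ 2 * sigma_max N + b / r ^+ 2.
Proof.
have imag om : (0 +i* om) + ((0 +i* om)^*)%C = 0 :> C.
  by apply/eqP; rewrite eq_complex /= addr0 subrr !eqxx.
split; first by move=> om; apply: K_unit.
set V := a / r ^+ 2 * sigma_max N + b / r ^+ 2.
have V_ge0 : 0 <= V.
  by rewrite addr_ge0 ?mulr_ge0 ?divr_ge0 ?invr_ge0 ?sqr_ge0 ?sigma_max_ge0.
have VC : V%:C = a%:C / (r%:C * r%:C) * (sigma_max N)%:C + b%:C / (r%:C * r%:C).
  by rewrite rmorphD !rmorphM fmorphV rmorphXn expr2.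
have coef_ge0 (x : R) : 0 <= x -> 0 <= x%:C / (r%:C * r%:C).
  by move=> x_ge0; rewrite divr_ge0 ?ler0c ?(ltW rC_gt0).
have Sigma_le s : s + (s^*)%C = 0 ->
    forall u, qform u (Sigma s *m adjmx (Sigma s)) <= V%:C * normsq u.
  move=> s_imag u; apply: le_trans (Sigma_qform_le u s_imag) _.
  rewrite VC mulrDl -(mulrA (a%:C / _)); apply: lerD; rewrite ler_wpM2l ?coef_ge0 //.
have [w w_neq0 [wN wPm]] := N_top_eigen.
have Sigma0_w : w *m (Sigma 0 *m adjmx (Sigma 0)) = V%:C *: w.
  by rewrite Sigma0_gram mulmxDr -!scalemxAr wN wPm scalerA VC scalerDl.
have sigma0 : sigma_max (Sigma 0) = Num.sqrt V.
  by apply: sigma_max_eq V_ge0 (Sigma_le 0 _) w_neq0 Sigma0_w; rewrite conjc0 addr0.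
have hinf_le y : hinf_set Sigma y -> y <= Num.sqrt V.
  by move=> [om _ <-]; apply: sigma_max_le V_ge0 (Sigma_le _ (imag om)).
have hinf0 : hinf_set Sigma (Num.sqrt V) by exists 0.
split; first exact: has_sup_max hinf0 hinf_le.
by rewrite /hinf_norm (sup_max hinf0 hinf_le) sqr_sqrtr.
Qed.

End TransferFunction.


Section RealTransferFunction.
Variable R : realType.

Lemma cmxM p q s (A : 'M[R]_(p, q)) (B : 'M_(q, s)) : cmx (A *m B) = cmx A *m cmx B.
Proof. exact: map_mxM. Qed.

Lemma cmxD p q (A B : 'M[R]_(p, q)) : cmx (A + B) = cmx A + cmx B.
Proof. exact: map_mxD. Qed.

Lemma cmxZ p q a (A : 'M[R]_(p, q)) : cmx (a *: A) = a%:C *: cmx A.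
Proof. exact: map_mxZ. Qed.

Lemma cmxV p (A : 'M[R]_p) : cmx (invmx A) = invmx (cmx A).
Proof. exact: map_invmx. Qed.

Lemma unitmx_cmx p (A : 'M[R]_p) : (cmx A \in unitmx) = (A \in unitmx).
Proof. exact: map_unitmx. Qed.

Lemma row_free_cmx p q (A : 'M[R]_(p, q)) : row_free (cmx A) = row_free A.
Proof. by rewrite /row_free mxrank_map. Qed.

Theorem hinf_norm_real_transfer k p m q (A : 'M[R]_(k, p)) (Rm : 'M[R]_(k, m))
    (B : 'M[R]_(k, q)) (L M : 'M[R]_k) (r a b : R) :
  (0 < k)%N -> row_free A -> row_free Rm -> 0 < r -> 0 <= a -> 0 <= b ->
  L = A *m A^T -> M = r *: (L *m (Rm *m Rm^T)) ->
  B *m B^T = a *: L + b *: (L *m (Rm *m Rm^T) *m L) ->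
  let Sigma := fun s : R[i] => cmx Rm^T *m invmx (s *: 1%:M + cmx M) *m cmx B in
  (forall om : R, ((0 +i* om) *: 1%:M + cmx M) \in unitmx) /\
  has_sup (hinf_set Sigma) /\
  hinf_norm Sigma ^+ 2 =
    a / r ^+ 2 * sigma_max (cmx (Rm^T *m invmx (Rm *m Rm^T *m L *m Rm *m Rm^T) *m Rm))
    + b / r ^+ 2.
Proof.
move=> k_gt0 A_free Rm_free r_gt0 a_ge0 b_ge0 -> -> BBt Sigma.
have Ac_free : row_free (cmx A) by rewrite row_free_cmx.
have Rc_free : row_free (cmx Rm) by rewrite row_free_cmx.
have gramE j l (X : 'M[R]_(j, l)) : cmx (X *m X^T) = cmx X *m adjmx (cmx X).
  by rewrite cmxM adjmx_cmx.
have gram_unit j l (X : 'M[R]_(j, l)) : row_free X -> X *m X^T \in unitmx.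
  by move=> X_free; rewrite -unitmx_cmx gramE gram_unitmx ?row_free_cmx.
have BBH : cmx B *m adjmx (cmx B) = a%:C *: (cmx A *m adjmx (cmx A)) +
    b%:C *: (cmx A *m adjmx (cmx A) *m (cmx Rm *m adjmx (cmx Rm)) *m (cmx A *m adjmx (cmx A))).
  by rewrite -gramE BBt cmxD !cmxZ !cmxM -!adjmx_cmx !mulmxA.
have cME : cmx (r *: (A *m A^T *m (Rm *m Rm^T))) =
    r%:C *: (cmx A *m adjmx (cmx A) *m (cmx Rm *m adjmx (cmx Rm))).
  by rewrite cmxZ cmxM !gramE.
have cNE : cmx (Rm^T *m invmx (Rm *m Rm^T *m (A *m A^T) *m Rm *m Rm^T) *m Rm) =
    adjmx (cmx Rm) *m (invmx (cmx Rm *m adjmx (cmx Rm)) *m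
      invmx (cmx A *m adjmx (cmx A)) *m invmx (cmx Rm *m adjmx (cmx Rm))) *m cmx Rm.
  rewrite -(mulmxA (Rm *m Rm^T *m _)) !invmxM ?unitmx_mul ?gram_unit //.
  by rewrite !cmxM !cmxV !gramE adjmx_cmx; congr (_ *m _ *m _); rewrite mulmxA.
rewrite /Sigma cME cNE -adjmx_cmx.
exact: (hinf_norm_transfer k_gt0 Ac_free Rc_free r_gt0 a_ge0 b_ge0 BBH).
Qed.

End RealTransferFunction.


Lemma spanning_tree_incidence_ker (R : realType) n nt c (src tgt : 'I_(nt + c) -> 'I_n)
    (v : 'rV[R]_n) :
  spanning_tree src tgt -> v *m lsubmx (incidence R src tgt) = 0 ->
  forall i j, v 0 i = v 0 j.
Proof.
move=> tree vD.
have sum_indicator a : \sum_i v 0 i * (i == a)%:R = v 0 a.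
  by rewrite (bigD1 a) //= eqxx mulr1 big1 ?addr0 // => i /negPf ->; rewrite mulr0.
have edge_eq (l : 'I_nt) : v 0 (src (lshift c l)) = v 0 (tgt (lshift c l)).
  move/rowP: vD => /(_ l); rewrite !mxE.
  under eq_bigr => i _ do rewrite !mxE mulrBr.
  by rewrite sumrB !sum_indicator => /eqP; rewrite subr_eq0 => /eqP.
have rel_eq i j : tree_rel src tgt i j -> v 0 i = v 0 j.
  by case/existsP => l /orP[] /andP[/eqP <- /eqP <-]; rewrite edge_eq.
move=> i j; have /connectP [walk walk_path ->] := tree i j.
elim: walk i walk_path => [|x walk IH] i //= /andP[ix walk_path].
by rewrite (rel_eq _ _ ix) IH.
Qed.

Lemma spanning_tree_row_free (R : realType) n c (src tgt : 'I_(n.-1 + c) -> 'I_n) :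
  (0 < n)%N -> spanning_tree src tgt ->
  row_free (lsubmx (incidence R src tgt) : 'M_(n, n.-1))^T.
Proof.
move=> n_gt0 tree; set Dt := lsubmx _.
have ker_const : (kermx Dt <= (const_mx 1 : 'rV[R]_n))%MS.
  apply/row_subP => i; set v := row i (kermx Dt).
  have vD : v *m Dt = 0 by rewrite -row_mul mulmx_ker row0.
  clearbody v.
  have -> : v = v 0 (Ordinal n_gt0) *: const_mx 1.
    apply/rowP => j; rewrite !mxE mulr1.
    exact: spanning_tree_incidence_ker tree vD j (Ordinal n_gt0).
  by rewrite scalemx_sub.
have := leq_trans (mxrankS ker_const) (rank_leq_row _); rewrite mxrank_ker.
by rewrite /row_free mxrank_tr eqn_leq rank_leq_col /=; lia.
Qed.

Section DiagonalMatrices.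
Variable R : realType.

Lemma diagv_const k (d : 'I_k -> R) x : (forall i, d i = x) -> diagv d = x%:M.
Proof. by move=> dE; apply/matrixP => i j; rewrite !mxE dE. Qed.

Lemma diagv_unitmx k (d : 'I_k -> R) : (forall i, d i != 0) -> diagv d \in unitmx.
Proof.
by move=> d_neq0; rewrite unitmxE det_diag unitfE; apply/prodf_neq0 => i _; rewrite mxE.
Qed.

Lemma diagv_inv_sqrt_gram k (e : 'I_k -> R) : (forall i, 0 < e i) ->
  diagv (fun i => (Num.sqrt (e i))^-1) *m (diagv (fun i => (Num.sqrt (e i))^-1))^T =
  diagv (fun i => (e i)^-1).
Proof.
move=> e_gt0; rewrite tr_diag_mx diag_mxM; congr diag_mx; apply/rowP => i.
by rewrite !mxE -invfM -expr2 sqr_sqrtr // ltW.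
Qed.

End DiagonalMatrices.

Lemma row_mx_gram (K : comPzRingType) k p q (X : 'M[K]_(k, p)) (Y : 'M[K]_(k, q)) a b :
  row_mx (a *: X) (b *: Y) *m (row_mx (a *: X) (b *: Y))^T =
  a ^+ 2 *: (X *m X^T) + b ^+ 2 *: (Y *m Y^T).
Proof. by rewrite tr_row_mx mul_row_col !linearZ /= -!scalemxAl !scalerA -!expr2. Qed.

Unset Implicit Arguments.
Local Close Scope complex_scope.

Theorem corollary1 (R : realType) (n c : nat)
    (src tgt : 'I_(n.-1 + c) -> 'I_n)
    (w : 'I_(n.-1 + c) -> R) (eps : 'I_n -> R) (rho sw sv : R) :
  (2 <= n)%N ->
  (* no self-loops *)
  (forall l, src l != tgt l) ->
  (* edges form a set: no two edges join the same pair of nodes *)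
  (forall l l', l != l' ->
     ~~ (((src l == src l') && (tgt l == tgt l')) ||
         ((src l == tgt l') && (tgt l == src l')))) ->
  (* the first n-1 edges form a spanning tree *)
  spanning_tree src tgt ->
  (forall i, 0 < eps i) ->
  0 < rho ->
  (* W = rho I *)
  (forall l, w l = rho) ->
  let D := incidence R src tgt in
  let Dt : 'M[R]_(n, n.-1) := lsubmx D in
  let Dc : 'M[R]_(n, c) := rsubmx D in
  let Ttc := invmx (Dt^T *m Dt) *m Dt^T *m Dc in
  let Rm : 'M[R]_(n.-1, n.-1 + c) := row_mx 1%:M Ttc in
  let W := diagv w in
  let Wh := diagv (fun l => Num.sqrt (w l)) in
  let Einv := diagv (fun i => (eps i)^-1) in
  let Einvh := diagv (fun i => (Num.sqrt (eps i))^-1) in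
  let L := Dt^T *m Einv *m Dt in
  let M := L *m Rm *m W *m Rm^T in
  let B : 'M[R]_(n.-1, n + (n.-1 + c)) :=
    row_mx (sw *: (Dt^T *m Einvh)) (- sv *: (L *m Rm *m Wh)) in
  let Sigma := fun s : R[i] =>
    cmx Rm^T *m invmx (s *: 1%:M + cmx M) *m cmx B in
  (forall om : R, (((0 +i* om)%C : R[i]) *: 1%:M + cmx M) \in unitmx) /\
  has_sup (hinf_set Sigma) /\
  hinf_norm Sigma ^+ 2 =
    rho^-2 * sw ^+ 2 *
      sigma_max (cmx (Rm^T *m invmx (Rm *m Rm^T *m L *m Rm *m Rm^T) *m Rm))
    + rho^-1 * sv ^+ 2.
Proof.
(* Only the spanning tree matters; loops and multiple edges are irrelevant. *)
move=> n_ge2 _ _ tree eps_gt0 rho_gt0 w_rho D Dt Dc Ttc Rm W Wh Einv Einvh L M B Sigma.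
have n_gt0 : (0 < n)%N by apply: leq_trans n_ge2.
have k_gt0 : (0 < n.-1)%N by rewrite -subn1 subn_gt0.
pose A := Dt^T *m Einvh.
have A_free : row_free A.
  rewrite /row_free mxrankMfree; first exact: spanning_tree_row_free.
  by rewrite row_free_unit diagv_unitmx // => i; rewrite invr_eq0 gt_eqF ?sqrtr_gt0.
have LE : L = A *m A^T.
  by rewrite /A trmx_mul trmxK mulmxA -(mulmxA _ Einvh) diagv_inv_sqrt_gram.
have LT : L^T = L by rewrite LE trmx_mul trmxK.
have WE : W = rho%:M := diagv_const w_rho.
have WhE : Wh = (Num.sqrt rho)%:M by apply: diagv_const => l; rewrite w_rho.
have ME : M = rho *: (L *m (Rm *m Rm^T)).
  by rewrite /M WE mul_mx_scalar -scalemxAl -mulmxA.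
have BBt : B *m B^T = sw ^+ 2 *: L + (sv ^+ 2 * rho) *: (L *m (Rm *m Rm^T) *m L).
  rewrite row_mx_gram -LE sqrrN -scalerA; congr (_ + _ *: _).
  rewrite [(L *m Rm *m Wh)^T]trmx_mul [(L *m Rm)^T]trmx_mul LT WhE tr_scalar_mx.
  rewrite mul_mx_scalar mul_scalar_mx -scalemxAl -scalemxAr scalerA -expr2 sqr_sqrtr ?ltW //.
  by rewrite (mulmxA (L *m Rm)) (mulmxA L Rm).
have [K_unit [Sigma_sup ->]] := hinf_norm_real_transfer k_gt0 A_free
  (row_free_row_mx1 Ttc) rho_gt0 (sqr_ge0 sw) (mulr_ge0 (sqr_ge0 sv) (ltW rho_gt0)) LE ME BBt.
do 2!split => //; field; exact: lt0r_neq0.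
Qed.
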